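(* Let $g:\mathbb{C}\to\mathbb{C}$ be holomorphic at $0$ with $g(0)=0$ and $g'(0)\neq 0$, and let $\varphi:\mathbb{N}\to\mathbb{C}\setminus\{0\}$. Let $(P_n(x))_{n\ge 0}$ be a sequence of Appell polynomials of type $(g,\varphi)$ with generating function $f$, i.e. $f$ is holomorphic at $0$, $f(0)\neq 0$, and $$\sum_{n\ge 0}P_n(x)\frac{t^n}{\varphi(0)\varphi(1)\cdots\varphi(n)}=f(t)e^{x g(t)}$$ for all $x$ and all $t$ near $0$. Then $P_n(-x)=(-1)^nP_n(x)$ for all $n\ge0$ and all $x$ if and only if $g$ is odd and $f$ is even.
   Context: Here $\mathbb{N}=\{0,1,2,\dots\}$. A sequence of Appell polynomials of type $(g,\varphi)$ is a sequence of polynomials for which some $f$ holomorphic at $0$ with $f(0)\ne0$ satisfies the displayed identity. *)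

From Stdlib Require Import Reals.
From Coquelicot Require Export Coquelicot.
Open Scope R_scope.

Definition cpow (z : C) (n : nat) : C := @pow_n C_Ring z n.

Definition has_cderiv (f : C -> C) (z : C) (l : C) : Prop :=
  @is_derive C_AbsRing C_NormedModule f z l.

Definition holomorphic_at0 (f : C -> C) : Prop :=
  exists r : R, 0 < r /\ forall z : C, Cmod z < r -> exists l : C, has_cderiv f z l.

Definition cexp (z : C) : C :=
  (exp (fst z) * cos (snd z), exp (fst z) * sin (snd z)).

Fixpoint phiprod (phi : nat -> C) (n : nat) : C :=
  match n with
  | O => phi O
  | S m => Cmult (phiprod phi m) (phi (S m))
  end.

Definition is_poly_fun (p : C -> C) : Prop :=
  exists (d : nat) (a : nat -> C), forall x : C,
    p x = @sum_n C_AbelianMonoid (fun k => Cmult (a k) (cpow x k)) d.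

Definition appell_gen (g : C -> C) (phi : nat -> C) (f : C -> C) (P : nat -> C -> C) : Prop :=
  holomorphic_at0 f /\ f (RtoC 0) <> RtoC 0 /\
  (forall n, is_poly_fun (P n)) /\
  forall x : C, exists r : R, 0 < r /\ forall t : C, Cmod t < r ->
    @is_series C_AbsRing C_NormedModule
      (fun n => Cdiv (Cmult (P n x) (cpow t n)) (phiprod phi n))
      (Cmult (f t) (cexp (Cmult x (g t)))).

(* oddness / evenness as germs at 0 (g, f are only relevant near 0) *)
Definition odd_near0 (g : C -> C) : Prop :=
  exists r : R, 0 < r /\ forall z : C, Cmod z < r -> g (Copp z) = Copp (g z).
Definition even_near0 (f : C -> C) : Prop :=
  exists r : R, 0 < r /\ forall z : C, Cmod z < r -> f (Copp z) = f z.

(* Both sides of the equivalence compare the generating function with its reflection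
   t -> -t, x -> -x.  If P_n(-x) = (-1)^n P_n(x), the two series coincide, so
   f(-t) e^{x g(-t)} = f(t) e^{-x g(t)} near 0: x = 0 gives f even, and x = 1 gives
   e^{g(-t) + g(t)} = 1, which forces g(-t) = -g(t) because, by continuity of g at
   g(0) = 0, the imaginary part of g(-t) + g(t) stays below 2 pi.
   Conversely, if g is odd and f even, the two series have the same sum for all small
   real t, and the identity theorem for real power series compares the coefficients. *)

From Stdlib Require Import Reals Lra Lia.
From Coquelicot Require Import Coquelicot.

Lemma is_lim_seq_bounded (u : nat -> R) (l : R) :
  is_lim_seq u l -> exists M, forall n, Rabs (u n) <= M.
Proof.
  intros Hu.
  apply is_lim_seq_abs, is_lim_seq_Reals in Hu.
  destruct (cauchy_bound _ (CV_Cauchy _ (exist _ _ Hu))) as [M HM].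
  exists M; intros n; apply HM; exists n; reflexivity.
Qed.

Lemma CV_radius_ge_series (a : nat -> R) (x l : R) :
  is_series (fun n => a n * x ^ n) l -> Rbar_le (Rabs x) (CV_radius a).
Proof.
  intros Hs.
  destruct (is_lim_seq_bounded _ 0 (ex_series_lim_0 _ (ex_intro _ l Hs))) as [M HM].
  apply (proj1 (CV_radius_bounded a)); exists M; intros n.
  rewrite RPow_abs, Rabs_mult, Rabs_Rabsolu, <- Rabs_mult; apply HM.
Qed.

Lemma pseries_coef_zero (a : nat -> R) (r : R) : 0 < r ->
  (forall t, Rabs t < r -> is_series (fun n => a n * t ^ n) 0) -> forall n, a n = 0.
Proof.
  intros Hr Ha n.
  assert (Hrad : Rbar_lt 0 (CV_radius a)).
  { apply Rbar_lt_le_trans with (Rabs (r / 2)).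
    - simpl; rewrite Rabs_pos_eq; lra.
    - apply (CV_radius_ge_series _ _ 0), Ha; rewrite Rabs_pos_eq; lra. }
  assert (Hzero : locally 0 (fun t => PSeries a t = 0)).
  { exists (mkposreal r Hr); intros t Ht.
    apply is_pseries_unique, is_pseries_R, Ha.
    change (Rabs (t - 0) < r) in Ht; rewrite Rminus_0_r in Ht; exact Ht. }
  pose proof (Derive_n_coef a n Hrad) as Hcoef.
  rewrite (Derive_n_ext_loc _ (fun _ : R_UniformSpace => 0)) in Hcoef by exact Hzero.
  assert (Hconst : Derive_n (fun _ : R_UniformSpace => 0) n 0 = 0)
    by (destruct n; [reflexivity | rewrite Derive_n_const; reflexivity]).
  rewrite Hconst in Hcoef.
  pose proof (INR_fact_neq_0 n) as Hfact.
  destruct (Rmult_integral _ _ (eq_sym Hcoef)); [assumption | contradiction].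
Qed.

Local Open Scope C_scope.

Local Notation is_Cseries := (@is_series C_AbsRing C_NormedModule : (nat -> C) -> C -> Prop).

Lemma is_Cseries_unique (u : nat -> C) (l1 l2 : C) :
  is_Cseries u l1 -> is_Cseries u l2 -> l1 = l2.
Proof. exact (filterlim_locally_unique _ l1 l2). Qed.

Lemma is_Cseries_ext (u v : nat -> C) (l : C) :
  (forall n, u n = v n) -> is_Cseries u l -> is_Cseries v l.
Proof. exact (is_series_ext u v l). Qed.

Lemma is_Cseries_fst (u : nat -> C) (l : C) :
  is_Cseries u l -> is_series (fun n => fst (u n)) (fst l).
Proof.
  intros Hu.
  apply (filterlim_ext (fun N => fst (sum_n u N))).
  - intros N; symmetry; induction N as [|N IH].
    + rewrite !sum_O; reflexivity.
    + rewrite !sum_Sn, IH; reflexivity.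
  - eapply filterlim_comp; [exact Hu |].
    apply filterlim_locally; intros eps; exists eps; intros z [Hfst _]; exact Hfst.
Qed.

Lemma is_Cseries_snd (u : nat -> C) (l : C) :
  is_Cseries u l -> is_series (fun n => snd (u n)) (snd l).
Proof.
  intros Hu.
  apply (filterlim_ext (fun N => snd (sum_n u N))).
  - intros N; symmetry; induction N as [|N IH].
    + rewrite !sum_O; reflexivity.
    + rewrite !sum_Sn, IH; reflexivity.
  - eapply filterlim_comp; [exact Hu |].
    apply filterlim_locally; intros eps; exists eps; intros z [_ Hsnd]; exact Hsnd.
Qed.

Lemma Cpseries_coef_zero (c : nat -> C) (r : R) : (0 < r)%R ->
  (forall t : R, (Rabs t < r)%R -> is_Cseries (fun n => c n * RtoC (t ^ n)) 0) ->
  forall n, c n = 0.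
Proof.
  intros Hr Hc n.
  assert (Hre : forall k, fst (c k) = 0%R).
  { apply (pseries_coef_zero _ r Hr); intros t Ht.
    eapply is_series_ext; [| exact (is_Cseries_fst _ _ (Hc t Ht))].
    intros k; simpl; ring. }
  assert (Him : forall k, snd (c k) = 0%R).
  { apply (pseries_coef_zero _ r Hr); intros t Ht.
    eapply is_series_ext; [| exact (is_Cseries_snd _ _ (Hc t Ht))].
    intros k; simpl; ring. }
  rewrite (surjective_pairing (c n)), Hre, Him; reflexivity.
Qed.

Lemma Cpseries_coef_unique (a b : nat -> C) (l : R -> C) (r : R) : (0 < r)%R ->
  (forall t : R, (Rabs t < r)%R -> is_Cseries (fun n => a n * RtoC (t ^ n)) (l t)) ->
  (forall t : R, (Rabs t < r)%R -> is_Cseries (fun n => b n * RtoC (t ^ n)) (l t)) ->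
  forall n, a n = b n.
Proof.
  intros Hr Ha Hb n.
  assert (Hdiff : forall k, a k - b k = 0).
  { apply (Cpseries_coef_zero _ r Hr); intros t Ht.
    replace (RtoC 0) with (l t - l t) by ring.
    eapply is_Cseries_ext; [| exact (is_series_minus _ _ _ _ (Ha t Ht) (Hb t Ht))].
    intros k; cbv beta.
    change (a k * RtoC (t ^ k) - b k * RtoC (t ^ k) = (a k - b k) * RtoC (t ^ k)); ring. }
  specialize (Hdiff n).
  replace (a n) with (a n - b n + b n) by ring.
  rewrite Hdiff; ring.
Qed.

Lemma cpow_S (z : C) (n : nat) : cpow z (S n) = z * cpow z n.
Proof. reflexivity. Qed.

Lemma cpow_RtoC (t : R) (n : nat) : cpow (RtoC t) n = RtoC (t ^ n).
Proof.
  induction n as [|n IH]; [reflexivity |].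
  rewrite cpow_S, IH; simpl; unfold Cmult, RtoC; simpl; f_equal; ring.
Qed.

Lemma cpow_opp (z : C) (n : nat) : cpow (- z) n = cpow (- (1)) n * cpow z n.
Proof.
  induction n as [|n IH].
  - change (RtoC 1 = RtoC 1 * RtoC 1); ring.
  - rewrite !cpow_S, IH; ring.
Qed.

Lemma cexp_0 : cexp 0 = 1.
Proof. unfold cexp, RtoC; simpl; rewrite exp_0, cos_0, sin_0; f_equal; ring. Qed.

Lemma cexp_add (a b : C) : cexp (a + b) = cexp a * cexp b.
Proof.
  destruct a as [a1 a2], b as [b1 b2]; unfold cexp, Cplus, Cmult; simpl.
  rewrite exp_plus, cos_plus, sin_plus; f_equal; ring.
Qed.

Lemma cexp_eq_1 (z : C) : cexp z = 1 -> (Rabs (snd z) < 2 * PI)%R -> z = 0.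
Proof.
  destruct z as [a b]; unfold cexp, RtoC; simpl; intros Hexp Hb.
  injection Hexp as Hre Him.
  pose proof (exp_pos a) as Ha.
  pose proof PI_RGT_0 as Hpi.
  assert (Hsin : sin b = 0%R) by (destruct (Rmult_integral _ _ Him); lra).
  destruct (sin_eq_0_0 b Hsin) as [k Hk]; subst b.
  assert (Hk : (Rabs (IZR k) < 2)%R).
  { rewrite Rabs_mult, (Rabs_pos_eq PI) in Hb by lra; nra. }
  apply Rabs_def2 in Hk; destruct Hk as [Hk_lt Hk_gt].
  apply lt_IZR in Hk_lt; apply (lt_IZR (-2)) in Hk_gt.
  assert (k = (-1)%Z \/ k = 0%Z \/ k = 1%Z) as [-> | [-> | ->]] by lia.
  - replace (IZR (-1) * PI)%R with (- PI)%R in Hre by (simpl; ring).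
    rewrite cos_neg, cos_PI in Hre; lra.
  - replace (IZR 0 * PI)%R with 0%R in * by (simpl; ring).
    rewrite cos_0, Rmult_1_r, <- exp_0 in Hre.
    apply exp_inv in Hre; subst a; reflexivity.
  - replace (IZR 1 * PI)%R with PI in Hre by (simpl; ring).
    rewrite cos_PI in Hre; lra.
Qed.

Definition near0 (Q : C -> Prop) : Prop :=
  exists r : R, (0 < r)%R /\ forall z : C, (Cmod z < r)%R -> Q z.

Lemma near0_and (Q1 Q2 : C -> Prop) :
  near0 Q1 -> near0 Q2 -> near0 (fun z => Q1 z /\ Q2 z).
Proof.
  intros [r1 [Hr1 H1]] [r2 [Hr2 H2]].
  exists (Rmin r1 r2); split; [apply Rmin_pos; assumption |].
  intros z Hz; split.
  - apply H1; eapply Rlt_le_trans; [exact Hz | apply Rmin_l].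
  - apply H2; eapply Rlt_le_trans; [exact Hz | apply Rmin_r].
Qed.

Lemma near0_mono (Q1 Q2 : C -> Prop) :
  near0 Q1 -> (forall z, Q1 z -> Q2 z) -> near0 Q2.
Proof. intros [r [Hr H]] HQ; exists r; split; [exact Hr |]; intros z Hz; apply HQ, H, Hz. Qed.

Lemma near0_opp (Q : C -> Prop) : near0 Q -> near0 (fun z => Q (- z)).
Proof. intros [r [Hr H]]; exists r; split; [exact Hr |]; intros z Hz; apply H; rewrite Cmod_opp; exact Hz. Qed.

Lemma near0_real (Q : C -> Prop) :
  near0 Q -> exists r, (0 < r)%R /\ forall t : R, (Rabs t < r)%R -> Q (RtoC t).
Proof. intros [r [Hr H]]; exists r; split; [exact Hr |]; intros t Ht; apply H; rewrite Cmod_R; exact Ht. Qed.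

Lemma cderiv_near0 (h : C -> C) (l : C) (eps : posreal) : has_cderiv h 0 l ->
  near0 (fun z => Rabs (fst (h z) - fst (h 0)) < eps /\ Rabs (snd (h z) - snd (h 0)) < eps)%R.
Proof.
  intros Hl.
  pose proof (ex_derive_continuous h (RtoC 0) (ex_intro _ l Hl)) as Hcont.
  destruct (proj1 (@filterlim_locally _ C_UniformSpace _ _ h (h 0)) Hcont eps) as [d Hd].
  exists d; split; [apply cond_pos |]; intros z Hz.
  apply Hd.
  change (Cmod (z - 0) < d)%R; replace (z - 0) with z by ring; exact Hz.
Qed.

Lemma holomorphic_at0_cderiv0 (h : C -> C) : holomorphic_at0 h -> exists l, has_cderiv h 0 l.
Proof. intros [r [Hr Hh]]; apply Hh; rewrite Cmod_0; exact Hr. Qed.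

Lemma cderiv_near0_neq_0 (h : C -> C) (l : C) : has_cderiv h 0 l -> h 0 <> 0 ->
  near0 (fun z => h z <> 0).
Proof.
  intros Hl Hh0.
  assert (Hmax : (0 < Rmax (Rabs (fst (h 0))) (Rabs (snd (h 0))))%R).
  { apply Cmod_gt_0 in Hh0; pose proof (Cmod_2Rmax (h 0)); pose proof (sqrt_pos 2).
    pose proof (Rmax_l (Rabs (fst (h 0))) (Rabs (snd (h 0)))); pose proof (Rabs_pos (fst (h 0))).
    nra. }
  apply (near0_mono _ _ (cderiv_near0 h l (mkposreal _ Hmax) Hl)); simpl.
  intros z [Hre Him] Hz; rewrite Hz in Hre, Him; simpl in Hre, Him.
  rewrite Rminus_0_l, Rabs_Ropp in Hre, Him.
  unfold Rmax in *; destruct Rle_dec; lra.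
Qed.

Definition parity_sym (P : nat -> C -> C) : Prop :=
  forall (n : nat) (x : C), P n (- x) = cpow (- (1)) n * P n x.

Section AppellParity.

Variables (g f : C -> C) (phi : nat -> C) (P : nat -> C -> C).
Hypothesis phi_neq_0 : forall n, phi n <> 0.
Hypothesis P_gen : forall x : C,
  near0 (fun t => is_Cseries (fun n => P n x * cpow t n / phiprod phi n) (f t * cexp (x * g t))).

Lemma phiprod_neq_0 (n : nat) : phiprod phi n <> 0.
Proof. induction n as [|n IH]; simpl; [| apply Cmult_neq_0]; auto. Qed.

Lemma parity_sym_gen_reflect : parity_sym P -> forall x : C,
  near0 (fun t => f (- t) * cexp (x * g (- t)) = f t * cexp (- x * g t)).
Proof.
  intros HP x.
  apply (near0_mono _ _ (near0_and _ _ (near0_opp _ (P_gen x)) (P_gen (- x)))).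
  intros t [Hx Hopp]; simpl in Hx.
  apply (is_Cseries_unique _ _ _ Hx).
  eapply is_Cseries_ext; [| exact Hopp].
  intros n; cbv beta; rewrite HP, (cpow_opp t); field; apply phiprod_neq_0.
Qed.

Lemma parity_sym_even : parity_sym P -> even_near0 f.
Proof.
  intros HP.
  apply (near0_mono _ _ (parity_sym_gen_reflect HP 0)); intros t Ht.
  replace (0 * g (- t)) with (RtoC 0) in Ht by ring.
  replace (- 0 * g t) with (RtoC 0) in Ht by ring.
  rewrite cexp_0, !Cmult_1_r in Ht; exact Ht.
Qed.

Lemma parity_sym_odd (lg lf : C) : has_cderiv g 0 lg -> g 0 = 0 ->
  has_cderiv f 0 lf -> f 0 <> 0 -> parity_sym P -> odd_near0 g.
Proof.
  intros Hg Hg0 Hf Hf0 HP.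
  pose proof (cderiv_near0 g lg (mkposreal 1 Rlt_0_1) Hg) as Hg_small.
  rewrite Hg0 in Hg_small.
  pose proof (near0_and _ _ (near0_and _ _ Hg_small (near0_opp _ Hg_small))
    (near0_and _ _ (cderiv_near0_neq_0 f lf Hf Hf0)
      (near0_and _ _ (parity_sym_even HP) (parity_sym_gen_reflect HP 1)))) as Hnear.
  apply (near0_mono _ _ Hnear); simpl.
  intros z [[[_ Hz] [_ Hmz]] [Hfz [Heven Hrefl]]].
  rewrite Heven in Hrefl.
  assert (Hexp_opp : cexp (g (- z)) = cexp (- g z)).
  { replace (cexp (g (- z))) with (/ f z * (f z * cexp (1 * g (- z))))
      by (rewrite Cmult_1_l; field; exact Hfz).
    rewrite Hrefl; replace (- (1) * g z) with (- g z) by ring; field; exact Hfz. }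
  assert (Hexp : cexp (g (- z) + g z) = 1).
  { rewrite cexp_add, Hexp_opp, <- cexp_add.
    replace (- g z + g z) with (RtoC 0) by ring; apply cexp_0. }
  apply cexp_eq_1 in Hexp.
  - replace (g (- z)) with (g (- z) + g z - g z) by ring; rewrite Hexp; ring.
  - simpl in Hz, Hmz |- *; rewrite Rminus_0_r in Hz, Hmz.
    pose proof PI2_3_2; pose proof (Rabs_triang (snd (g (- z))) (snd (g z))); lra.
Qed.

Lemma odd_even_parity_sym : odd_near0 g -> even_near0 f -> parity_sym P.
Proof.
  intros Hodd Heven n x.
  pose proof (near0_and _ _ (near0_and _ _ Hodd Heven)
    (near0_and _ _ (P_gen (- x)) (near0_opp _ (P_gen x)))) as Hnear.
  destruct (near0_real _ Hnear) as [r [Hr Hser]].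
  assert (Hcoef : forall k, P k (- x) / phiprod phi k = cpow (- (1)) k * P k x / phiprod phi k).
  { apply (Cpseries_coef_unique _ _ (fun t => f t * cexp (- x * g t)) r Hr); intros t Ht;
      destruct (Hser t Ht) as [[Hg_odd Hf_even] [Hopp Hx]]; simpl in Hx.
    - eapply is_Cseries_ext; [| exact Hopp].
      intros k; cbv beta; rewrite cpow_RtoC; field; apply phiprod_neq_0.
    - rewrite Hf_even, Hg_odd in Hx; replace (- x * g t) with (x * - g t) by ring.
      eapply is_Cseries_ext; [| exact Hx].
      intros k; cbv beta; rewrite cpow_opp, cpow_RtoC; field; apply phiprod_neq_0. }
  specialize (Hcoef n).
  replace (P n (- x)) with (P n (- x) / phiprod phi n * phiprod phi n)
    by (field; apply phiprod_neq_0).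
  rewrite Hcoef; field; apply phiprod_neq_0.
Qed.

End AppellParity.

Local Close Scope C_scope.

Theorem mainTheorem2 (g : C -> C) (phi : nat -> C) (f : C -> C) (P : nat -> C -> C) :
  holomorphic_at0 g -> g (RtoC 0) = RtoC 0 ->
  (exists l : C, has_cderiv g (RtoC 0) l /\ l <> RtoC 0) ->
  (forall n, phi n <> RtoC 0) ->
  appell_gen g phi f P ->
  ((forall (n : nat) (x : C), P n (Copp x) = Cmult (cpow (Copp (RtoC 1)) n) (P n x))
   <-> (odd_near0 g /\ even_near0 f)).
Proof.
  intros _ Hg0 [lg [Hg _]] Hphi [Hf [Hf0 [_ HP_gen]]].
  destruct (holomorphic_at0_cderiv0 f Hf) as [lf Hlf].
  split.
  - intros HP; split.
    + exact (parity_sym_odd g f phi P Hphi HP_gen lg lf Hg Hg0 Hlf Hf0 HP).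
    + exact (parity_sym_even g f phi P Hphi HP_gen HP).
  - intros [Hodd Heven]; exact (odd_even_parity_sym g f phi P Hphi HP_gen Hodd Heven).
Qed.
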